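(* Let $G\in\mathcal{G}(\widehat{C}_6,\widehat{C}_7)$ and $xy\in E(G)$. Then $xy$ is a relating edge if and only if there exist an independent set $S_x\subseteq N_2(x)\setminus N(y)$ which dominates $N(x)\cap N_2(y)$, and an independent set $S_y\subseteq N_2(y)\setminus N(x)$ which dominates $N(y)\cap N_2(x)$.
   Context: All graphs are finite, simple and undirected. $\mathcal{G}(\widehat{C}_6,\widehat{C}_7)$ is the family of graphs with no subgraph (not necessarily induced) isomorphic to $C_6$ or $C_7$. $N_i(v)$ is the set of vertices at distance exactly $i$ from $v$, $N(v)=N_1(v)$; a set $S$ dominates $T$ if every vertex of $T$ is in $S$ or adjacent to a vertex of $S$. An edge $xy$ is relating if there exists an independent set $S$, containing neither $x$ nor $y$, such that both $S\cup\{x\}$ and $S\cup\{y\}$ are maximal independent sets of $G$. *)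

From mathcomp Require Import all_boot.
Set Implicit Arguments. Unset Strict Implicit. Unset Printing Implicit Defensive.

(* A finite simple graph on vertex type T : adjacency relation g,
   required (in the theorem) to be symmetric and irreflexive. *)

Section Graphs.
Variable T : finType.
Variable g : rel T.

Definition has_cycle_subgraph (k : nat) : Prop :=
  exists f : nat -> T,
    {in [pred i | i < k] &, injective f} /\
    forall i, i < k -> g (f i) (f (i.+1 %% k)).

Definition nbhd (v : T) : {set T} := [set u | g v u].

Definition nbhd2 (v : T) : {set T} :=
  [set u | [&& u != v, ~~ g v u & [exists w, g v w && g w u]]].

Definition independent (S : {set T}) : bool :=
  [forall u in S, forall w in S, ~~ g u w].

Definition maximal_independent (S : {set T}) : bool :=
  independent S &&
  [forall v, (v \notin S) ==> ~~ independent (v |: S)].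

Definition dominates (S U : {set T}) : bool :=
  [forall u in U, (u \in S) || [exists s in S, g s u]].

Definition relating (x y : T) : Prop :=
  exists S : {set T}, [/\ independent S, x \notin S, y \notin S,
    maximal_independent (x |: S) & maximal_independent (y |: S)].

End Graphs.

From mathcomp Require Import all_boot.
Set Implicit Arguments. Unset Strict Implicit. Unset Printing Implicit Defensive.

(* If [S] witnesses that [xy] is relating, the vertices of [S] adjacent to
   [N(x) \cap N_2(y)] form [S_x], and symmetrically for [S_y].  Conversely,
   keep only the vertices of [S_x] (resp. [S_y]) adjacent to some vertex of
   [N(x) \ N[y]] (resp. [N(y) \ N[x]]).  An edge [ab] between kept vertices
   [a] of [S_x] and [b] of [S_y] would close the 6-cycle [x y v b a t], where
   [v] is a neighbour of [b] in [N(y) \ N[x]] and [t] a common neighbour of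
   [x] and [a]; so their union is independent; extend it to an independent set [S] that is maximal among
   those avoiding [N[x] \cup N[y]].  Then [x + S] and [y + S] are both maximal
   independent. *)

Lemma has_cycle_subgraph_uniq (T : finType) (g : rel T) (x : T) (p : seq T) :
  uniq (x :: p) -> cycle g (x :: p) -> has_cycle_subgraph g (size p).+1.
Proof.
move=> Up /(pathP x) gp; exists (nth x (x :: p)); split.
  by move=> i j ilt jlt /eqP; rewrite nth_uniq // => /eqP.
move=> i ilt; have := gp i; rewrite size_rcons => /(_ ilt).
rewrite -rcons_cons nth_rcons /= ilt.
move: ilt; rewrite ltnS leq_eqVlt => /predU1P[->|ip].
  by rewrite nth_rcons ltnn eqxx modnn.
by rewrite nth_rcons ip modn_small.
Qed.

Section SimpleGraph.
Variables (T : finType) (g : rel T).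
Hypotheses (gsym : symmetric g) (girr : irreflexive g).

Lemma adj_neq u v : g u v -> u != v.
Proof. by apply: contraTneq => ->; rewrite girr. Qed.

Lemma sep_neq z u w : g z u -> ~~ g z w -> u != w.
Proof. by move=> zu; apply: contraNneq => <-. Qed.

Lemma independentP {S : {set T}} :
  reflect {in S &, forall u w, ~~ g u w} (independent g S).
Proof.
apply: (iffP forall_inP) => [H u w uS wS | H u uS].
  by move/forall_inP: (H u uS); apply.
by apply/forall_inP => w; apply: H.
Qed.

Lemma independentU1 v (S : {set T}) :
  independent g (v |: S) = independent g S && [forall s in S, ~~ g v s].
Proof.
apply/independentP/andP => [H | [/independentP iS /forall_inP nvS] u w].
  split; first by apply/independentP => u w uS wS; apply: H; rewrite setU1r.
  by apply/forall_inP => s sS; apply: H; rewrite ?setU11 ?setU1r.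
rewrite !in_setU1 => /predU1P[->|uS] /predU1P[->|wS]; rewrite ?girr ?nvS //.
- by rewrite gsym nvS.
- exact: iS.
Qed.

Lemma maximal_independentP (S : {set T}) : independent g S ->
  reflect (forall v, v \notin S -> exists2 s, s \in S & g s v)
          (maximal_independent g S).
Proof.
move=> iS; rewrite /maximal_independent iS.
apply: (iffP forallP) => H v; last first.
  apply/implyP => vS; have [s sS gsv] := H v vS.
  by rewrite independentU1 iS /=; apply/forall_inP => /(_ s sS); rewrite gsym gsv.
move=> vS; have /implyP/(_ vS) := H v; rewrite independentU1 iS /= negb_forall_in.
by case/exists_inP => s sS /negbNE gvs; exists s; rewrite // gsym.
Qed.

Lemma independent_extension (V S0 : {set T}) :
  independent g S0 -> S0 \subset V ->
  exists S : {set T}, [/\ independent g S, S0 \subset S, S \subset V &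
    forall v, v \in V -> v \notin S -> exists2 s, s \in S & g s v].
Proof.
move=> iS0 S0V.
pose P := [pred S : {set T} | independent g S && (S \subset V)].
have /maxset_exists[S /maxsetP[/andP[iS SV] maxS] S0S] : P S0 by rewrite /= iS0.
exists S; split=> // v vV vS.
apply/exists_inP; apply: contraNT vS => noadj.
have ivS : independent g (v |: S).
  rewrite independentU1 iS; apply/forall_inP => s sS; rewrite gsym.
  by apply: contra noadj => gsv; apply/exists_inP; exists s.
by rewrite -(maxS (v |: S)) ?setU11 ?subsetUr //= ivS subUset sub1set vV.
Qed.

Lemma maximal_independentU1 x (S : {set T}) :
  independent g S -> {in S, forall s, ~~ g x s} ->
  (forall v, v != x -> ~~ g x v -> v \notin S -> exists2 s, s \in S & g s v) ->
  maximal_independent g (x |: S).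
Proof.
move=> iS nxS domS.
have ixS : independent g (x |: S) by rewrite independentU1 iS; apply/forall_inP.
apply/(maximal_independentP ixS) => v; rewrite in_setU1 negb_or => /andP[vx vS].
have [gxv | ngxv] := boolP (g x v); first by exists x; rewrite ?setU11.
by have [s sS gsv] := domS v vx ngxv vS; exists s; rewrite ?setU1r.
Qed.

Lemma relating_sym x y : relating g x y -> relating g y x.
Proof. by case=> S [iS xS yS mx my]; exists S. Qed.

Lemma mem_nbhd2D x y a : a \in nbhd2 g x :\: nbhd g y ->
  [/\ a != x, ~~ g x a, ~~ g y a & exists2 t, g x t & g t a].
Proof.
by rewrite !inE => /andP[nya /and3P[ax nxa /existsP[t /andP[xt ta]]]]; split=> //; exists t.
Qed.

Lemma C6_free_cross x y a b v : ~ has_cycle_subgraph g 6 -> g x y ->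
  a \in nbhd2 g x :\: nbhd g y -> b \in nbhd2 g y :\: nbhd g x ->
  g y v -> v != x -> ~~ g x v -> g b v -> ~~ g a b.
Proof.
move=> noC6 xy /mem_nbhd2D[ax nxa nya [t xt ta]] /mem_nbhd2D[b_y nyb nxb _] yv vx nxv bv.
apply/negP => ab; apply: noC6.
apply: (has_cycle_subgraph_uniq (x := t) (p := [:: x; y; v; b; a])).
  have [tx yx vb] : [/\ g t x, g y x & g v b] by split; rewrite gsym.
  have [ba a_t na_y] : [/\ g b a, g a t & ~~ g a y] by split; rewrite gsym.
  rewrite /= !inE !negb_or (adj_neq tx) (sep_neq a_t na_y) (sep_neq xt nxv).
  rewrite (sep_neq xt nxb) (adj_neq ta) (adj_neq xy) (eq_sym x v) vx.
  rewrite (sep_neq yx nyb) (eq_sym x a) ax (adj_neq yv) (eq_sym y b) b_y.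
  by rewrite (sep_neq xy nxa) (adj_neq vb) (sep_neq yv nya) (adj_neq ba).
by rewrite /= (gsym t x) (gsym v b) (gsym b a) (gsym a t) xt xy yv bv ab ta.
Qed.

Lemma relating_dominates x y : relating g x y ->
  exists Sx : {set T}, [/\ independent g Sx,
    Sx \subset nbhd2 g x :\: nbhd g y & dominates g Sx (nbhd g x :&: nbhd2 g y)].
Proof.
case=> S [iS xS yS mx my].
have [/andP[ixS _] /andP[iyS _]] := (mx, my).
have nxS : {in S, forall s, ~~ g x s}.
  by move: ixS; rewrite independentU1 => /andP[_ /forall_inP].
have nyS : {in S, forall s, ~~ g y s}.
  by move: iyS; rewrite independentU1 => /andP[_ /forall_inP].
have domy := elimT (maximal_independentP iyS) my.
exists (S :&: (nbhd2 g x :\: nbhd g y)); split.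
- by apply/independentP => u w /setIP[uS _] /setIP[wS _]; apply: (independentP iS).
- exact: subsetIr.
apply/forall_inP => u /setIP[]; rewrite !inE => xu /and3P[uy nyu _].
have uS : u \notin S by apply: contraTN xu; apply: nxS.
have [s] : exists2 s, s \in y |: S & g s u by apply: domy; rewrite in_setU1 negb_or uy.
rewrite in_setU1 => /predU1P[-> | sS] su; first by rewrite su in nyu.
have sx : s != x by apply: contraNneq xS => <-.
apply/orP; right; apply/exists_inP; exists s => //.
rewrite !inE sS nyS // nxS // sx /=.
by apply/existsP; exists u; rewrite xu gsym.
Qed.

Definition far_from x y : {set T} :=
  [set v | [&& v != x, v != y, ~~ g x v & ~~ g y v]].

Definition dominators x y (S : {set T}) : {set T} :=
  [set a in S | [exists v, [&& g x v, v != y, ~~ g y v & g a v]]].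

Lemma far_fromC x y : far_from x y = far_from y x.
Proof. by apply/setP => v; rewrite !inE; apply/and4P/and4P => -[]. Qed.

Lemma dominators_sub x y (S : {set T}) : dominators x y S \subset S.
Proof. by apply/subsetP => a; rewrite inE => /andP[]. Qed.

Lemma dominators_sub_far x y (S : {set T}) : g x y ->
  S \subset nbhd2 g x :\: nbhd g y -> dominators x y S \subset far_from x y.
Proof.
move=> xy SN; apply/subsetP => a /(subsetP (dominators_sub _ _ _)) /(subsetP SN).
case/mem_nbhd2D => ax nxa nya _.
by rewrite inE ax nxa nya (eq_sym a y) (sep_neq xy nxa).
Qed.

Lemma dominators_dominate x y (S : {set T}) : g x y ->
  S \subset nbhd2 g x :\: nbhd g y -> dominates g S (nbhd g x :&: nbhd2 g y) ->
  forall v, g x v -> v != y -> ~~ g y v -> exists2 a, a \in dominators x y S & g a v.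
Proof.
move=> xy SN domS v xv vy nyv.
have vN : v \in nbhd g x :&: nbhd2 g y.
  by rewrite !inE xv vy nyv /=; apply/existsP; exists x; rewrite gsym xy.
move/forall_inP: domS => /(_ v vN) /orP[/(subsetP SN) | /exists_inP[a aS av]].
  by case/mem_nbhd2D => _; rewrite xv.
by exists a; rewrite // inE aS; apply/existsP; exists v; rewrite xv vy nyv av.
Qed.

Lemma independent_dominatorsU x y (Sx Sy : {set T}) :
  ~ has_cycle_subgraph g 6 -> g x y -> independent g Sx -> independent g Sy ->
  Sx \subset nbhd2 g x :\: nbhd g y -> Sy \subset nbhd2 g y :\: nbhd g x ->
  independent g (dominators x y Sx :|: dominators y x Sy).
Proof.
move=> noC6 xy iSx iSy SxN SyN.
have cross a b : a \in dominators x y Sx -> b \in dominators y x Sy -> ~~ g a b.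
  case/setIdP => aS _ /setIdP[bS /existsP[v /and4P[yv vx nxv bv]]].
  exact: C6_free_cross noC6 xy (subsetP SxN a aS) (subsetP SyN b bS) yv vx nxv bv.
have [subX subY] := (subsetP (dominators_sub x y Sx), subsetP (dominators_sub y x Sy)).
apply/independentP => u w; rewrite !in_setU => /orP[uX | uY] /orP[wX | wY].
- exact: (independentP iSx) (subX u uX) (subX w wX).
- exact: cross.
- by rewrite gsym cross.
- exact: (independentP iSy) (subY u uY) (subY w wY).
Qed.

Lemma maximal_independent_side x y (S : {set T}) :
  g x y -> independent g S -> S \subset far_from x y ->
  (forall v, g y v -> v != x -> ~~ g x v -> exists2 s, s \in S & g s v) ->
  (forall v, v \in far_from x y -> v \notin S -> exists2 s, s \in S & g s v) ->
  maximal_independent g (x |: S).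
Proof.
move=> xy iS Sfar domNy domfar; apply: maximal_independentU1 => //.
  by move=> s /(subsetP Sfar); rewrite inE => /and4P[].
move=> v vx nxv vS; have [yv | nyv] := boolP (g y v); first exact: domNy.
by apply: domfar vS; rewrite inE vx nxv nyv eq_sym (sep_neq xy nxv).
Qed.

End SimpleGraph.

Theorem lemma3p1 (T : finType) (g : rel T)
  (gsym : symmetric g) (girr : irreflexive g)
  (noC6 : ~ has_cycle_subgraph g 6) (noC7 : ~ has_cycle_subgraph g 7)
  (x y : T) (hxy : g x y) :
  relating g x y <->
  (exists Sx : {set T}, [/\ independent g Sx,
      Sx \subset nbhd2 g x :\: nbhd g y &
      dominates g Sx (nbhd g x :&: nbhd2 g y)]) /\
  (exists Sy : {set T}, [/\ independent g Sy,
      Sy \subset nbhd2 g y :\: nbhd g x &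
      dominates g Sy (nbhd g y :&: nbhd2 g x)]).
Proof.
have hyx : g y x by rewrite gsym.
split=> [rxy | [[Sx [iSx SxN domSx]] [Sy [iSy SyN domSy]]]].
  by split; apply: relating_dominates => //; apply: relating_sym.
pose S0 := dominators g x y Sx :|: dominators g y x Sy.
have S0far : S0 \subset far_from g x y.
  by rewrite subUset dominators_sub_far // far_fromC dominators_sub_far.
have [S [iS S0S Sfar domS]] :=
  independent_extension gsym girr
    (independent_dominatorsU gsym girr noC6 hxy iSx iSy SxN SyN) S0far.
have S0_dominates a v : a \in S0 -> g a v -> exists2 s, s \in S & g s v.
  by move=> aS0 av; exists a => //; apply: (subsetP S0S).
exists S; split => //.
- by apply/negP => /(subsetP Sfar); rewrite inE eqxx.
- by apply/negP => /(subsetP Sfar); rewrite inE eqxx andbF.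
- apply: (maximal_independent_side gsym girr hxy iS Sfar) domS => v yv vx nxv.
  have [a aD av] := dominators_dominate gsym hyx SyN domSy yv vx nxv.
  by apply: (S0_dominates a v) av; rewrite in_setU aD orbT.
- rewrite far_fromC in Sfar domS.
  apply: (maximal_independent_side gsym girr hyx iS Sfar) domS => v xv vy nyv.
  have [a aD av] := dominators_dominate gsym hxy SxN domSx xv vy nyv.
  by apply: (S0_dominates a v) av; rewrite in_setU aD.
Qed.
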